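(* Let $G$ be a finite graph, $X$ its graph C*-correspondence over $A=C(G^{(0)})$, and $\beta>0$. Then \[\operatorname{Tr}_\beta(A)=\{\tau\in\operatorname{Tr}(A):h_X^\tau<\beta\}\quad\text{and}\quad\operatorname{Avt}_\beta(A)=\{\tau\in\operatorname{Tr}(A):G^t\tau=e^\beta\tau\},\] where $\tau$ is identified with the vector $(\tau(p_{v_1}),\dots,\tau(p_{v_n}))^t$.
   Context: $G$ is a finite directed graph with vertices $v_1,\dots,v_n$, edges $G^{(1)}$, source/range maps $s,r$; adjacency matrix $G_{ij}=\#\{e:s(e)=v_i,r(e)=v_j\}$, $G^t$ its transpose. $A=C(G^{(0)})$ spanned by orthogonal projections $p_v$; $\operatorname{Tr}(A)$ its (tracial) states, i.e. probability vectors. The graph C*-correspondence $X$ is spanned by $x_e$, $e\in G^{(1)}$, with $\langle x_e,x_f\rangle=\delta_{e,f}p_{s(f)}$, $p_vx_e=\delta_{v,r(e)}x_e$, $x_ep_v=\delta_{s(e),v}x_e$; $\{x_e\}$ is a unit decomposition. For edge words $\mu=\mu_k\cdots\mu_1$, $x_\mu=x_{\mu_k}\otimes\cdots\otimes x_{\mu_1}$, $x_\emptyset=1$. $c_{\tau,\beta}=\sum_{k\ge0}e^{-k\beta}\sum_{|\mu|=k}\tau(\langle x_\mu,x_\mu\rangle)$; $\operatorname{Tr}_\beta(A)=\{\tau:c_{\tau,\beta}<\infty\}$; $\operatorname{Avt}_\beta(A)=\{\tau:\tau(a)=e^{-\beta}\sum_{e}\tau(\langle x_e,ax_e\rangle)\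 \forall a\in A\}$. $h_X^\tau=\limsup_k k^{-1}\log\sum_{|\mu|=k}\tau(\langle x_\mu,x_\mu\rangle)$, taken to be $0$ if the terms eventually vanish. *)

From HB Require Import structures.
From mathcomp Require Import all_boot all_order all_algebra.
From mathcomp Require Import all_classical all_reals all_analysis.
Set Implicit Arguments. Unset Strict Implicit. Unset Printing Implicit Defensive.
Import Order.TTheory GRing.Theory Num.Theory.
Local Open Scope ring_scope.

(* A finite directed graph: vertices 'I_n, edges a finType E, maps s r.
   A = C(G^(0)) is identified with functions 'I_n -> R (p_v = indicator of v). *)
Section GraphCorr.
Variables (R : realType) (n : nat) (E : finType) (s r : E -> 'I_n).

Definition proj (v : 'I_n) : 'I_n -> R := fun w => (w == v)%:R.

(* <x_e, a x_e> = a(r e) p_{s e}, since a x_e = a(r e) x_e *)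
Definition ip_edge (e : E) (a : 'I_n -> R) : 'I_n -> R :=
  fun w => a (r e) * proj (s e) w.

(* For a word mu = [:: mu_k; ...; mu_1] (leftmost = mu_k),
   x_mu = x_{mu_k} (x) ... (x) x_{mu_1}, and
   word_ip mu a = <x_mu, a x_mu>, computed by
   <x (x) y, a (x (x) y)> = <y, <x, a x> y>, and <1, a 1> = a. *)
Fixpoint word_ip (mu : seq E) (a : 'I_n -> R) : 'I_n -> R :=
  match mu with
  | [::] => a
  | e :: mu' => word_ip mu' (ip_edge e a)
  end.

Definition one_A : 'I_n -> R := fun _ => 1.

Definition word_norm (mu : seq E) : 'I_n -> R := word_ip mu one_A.

(* tracial states of A = probability vectors *)
Definition is_state (tau : 'I_n -> R) : Prop :=
  (forall v, 0 <= tau v) /\ \sum_(v < n) tau v = 1.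

Definition evs (tau : 'I_n -> R) (a : 'I_n -> R) : R := \sum_(v < n) tau v * a v.

Definition Sk (tau : 'I_n -> R) (k : nat) : R :=
  \sum_(mu : k.-tuple E) evs tau (word_norm mu).

Definition Tr_beta (beta : R) (tau : 'I_n -> R) : Prop :=
  is_state tau /\
  (\sum_(0 <= k <oo) ((expR (- (k%:R * beta)) * Sk tau k)%:E) < +oo)%E.

Definition Avt_beta (beta : R) (tau : 'I_n -> R) : Prop :=
  is_state tau /\
  forall a : 'I_n -> R,
    evs tau a = expR (- beta) * \sum_(e : E) evs tau (ip_edge e a).

Definition entropy (tau : 'I_n -> R) : \bar R :=
  if `[< exists N : nat, forall k, (N <= k)%N -> Sk tau k = 0 >] then 0%E
  else limn_esup (fun k : nat => (ln (Sk tau k) / k%:R)%:E).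

Definition adjmx : 'M[R]_n :=
  \matrix_(i, j) (#|[set e : E | (s e == i) && (r e == j)]|)%:R.

Definition colvec (tau : 'I_n -> R) : 'cV[R]_n := \col_i tau i.

End GraphCorr.

From Pilot Require Import Defs.
From HB Require Import structures.
From mathcomp Require Import all_boot all_order all_algebra.
From mathcomp Require Import all_classical all_reals all_analysis.
From mathcomp Require Import lra.
Import Order.TTheory GRing.Theory Num.Theory.
Set Implicit Arguments. Unset Strict Implicit. Unset Printing Implicit Defensive.
Local Open Scope ring_scope.

(* Write S_k = sum_v tau(v) P_k(v), where P_k(v) = sum_{|mu| = k} <x_mu, x_mu>(v)
   ([npaths k v]) counts the paths of length k leaving v; then
   c_{tau,beta} = sum_k e^{-k beta} S_k.  If h_X^tau < beta, then S_k <= e^{kc}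
   eventually for some c < beta, and the series is dominated by a geometric one.
   Conversely, convergence alone would only give e^{-k beta} S_k -> 0; the graph
   improves this to a geometric rate.  The truncated sums
   A_N(v) = sum_{k<N} e^{-k beta} P_k(v) ([pathsum N v]) satisfy
   A_{N+1}(v) = 1 + e^{-beta} sum_{s e = v} A_N(r e), so they are bounded on the
   support of tau, hence on every vertex reachable from it, hence by a single M on
   that set, and the recursion then yields P_k(v) <= M l^k there, with
   l = e^beta (1 - 1/M) < e^beta.
   For Avt_beta, testing the defining identity on the projections p_v gives exactly
   G^t tau = e^beta tau, and these identities imply it for every a by linearity. *)

Section GrowthRates.
Variable R : realType.

Lemma limn_esup_ltP (x : nat -> R) (b : R) :
  (limn_esup (fun k => (x k)%:E) < b%:E)%E <->
  exists c N, c < b /\ forall k, (N <= k)%N -> x k <= c.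
Proof.
rewrite /limn_esup limf_esupE; split.
- move=> /ereal_inf_lt[_ [V [N _ VN] <-]].
  set y := ereal_sup _ => yb.
  have xy k : (N <= k)%N -> ((x k)%:E <= y)%E.
    by move=> Nk; apply: ereal_sup_ubound; exists k => //; exact: VN.
  move: yb xy; case: y => [c| |] // cb xy.
    by exists c, N; split=> [|k /xy]; rewrite ?lee_fin -?lte_fin.
  by have := xy N (leqnn N); rewrite leeNy_eq.
- move=> [c [N [cb xc]]]; apply: (@le_lt_trans _ _ c%:E); last by rewrite lte_fin.
  apply: ge_ereal_inf; exists (ereal_sup [set (x k)%:E | k in [set k | (N <= k)%N]]%classic).
    by exists [set k | (N <= k)%N]%classic => //; exists N.
  by apply: ge_ereal_sup => _ [k /= Nk <-]; rewrite lee_fin; exact: xc.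
Qed.

Lemma geometric_bound_ln_rate (u : nat -> R) (M l beta : R) :
  0 < beta -> 0 < M -> 0 <= l -> l < expR beta ->
  (forall k, u k <= M * l ^+ k) ->
  exists c N, c < beta /\ forall k, (N <= k)%N -> ln (u k) / k%:R <= c.
Proof.
move=> beta0 M0 l0 lb uM.
pose g := ln (Num.max l 1).
have g0 : 0 <= g by rewrite ln_ge0 // le_max lexx orbT.
have gb : g < beta.
  by rewrite -[beta]expRK ltr_ln ?posrE ?expR_gt0 ?lt_max ?ltr01 ?orbT // gt_max lb expR_gt1.
have ul k : u k <= M * expR (k%:R * g).
  rewrite expRM_natl lnK ?posrE ?lt_max ?ltr01 ?orbT //.
  apply: (le_trans (uM k)); rewrite ler_pM2l // lerXn2r ?nnegrE ?le_max ?lexx //.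
  by rewrite l0.
pose d := (beta - g) / 2.
exists (g + d); exists (Num.truncn (ln M / d)).+1; split=> [|k Nk]; first by rewrite /d; lra.
have k0 : 0 < k%:R :> R by rewrite ltr0n (leq_trans _ Nk).
have d0 : 0 < d by rewrite /d divr_gt0 // subr_gt0.
have lnMd : ln M < k%:R * d.
  rewrite -ltr_pdivrMr // (lt_le_trans (truncnS_gt _)) // ler_nat //.
rewrite ler_pdivrMr //; have [uk0|uk0] := leP (u k) 0.
  by rewrite ln0 // mulr_ge0 // ?addr_ge0 // ltW.
apply: (@le_trans _ _ (ln (M * expR (k%:R * g)))).
  by rewrite ler_ln ?posrE ?mulr_gt0 ?expR_gt0.
by rewrite lnM ?posrE ?expR_gt0 // expRK; lra.
Qed.

Lemma nneseries_geometric_lty (q : R) :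
  0 <= q < 1 -> (\sum_(0 <= k <oo) (q ^+ k)%:E < +oo)%E.
Proof.
move=> /andP[q0 q1].
have q1' : `|q| < 1 by rewrite ger0_norm.
rewrite (_ : (fun N => _) = EFin \o series (geometric 1 q)); last first.
  by apply/funext => N /=; rewrite sumEFin -exprn_geometric.
by rewrite EFin_lim ?ltry //; exact: is_cvg_geometric_series.
Qed.

Lemma nneseries_lty_eventually_geometric (t : nat -> R) (q : R) N :
  0 <= q < 1 -> (forall k, 0 <= t k) -> (forall k, (N <= k)%N -> t k <= q ^+ k) ->
  (\sum_(0 <= k <oo) (t k)%:E < +oo)%E.
Proof.
move=> q01 t0 tq; have /andP[q0 _] := q01.
have tail_lty : (\sum_(N <= k <oo) (q ^+ k)%:E < +oo)%E.
  apply: le_lt_trans (nneseries_geometric_lty q01).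
  rewrite [leRHS](nneseries_split 0 N) ?add0n => [|k _]; last by rewrite lee_fin exprn_ge0.
  by rewrite leeDr // sumEFin lee_fin sumr_ge0 // => k _; rewrite exprn_ge0.
rewrite (nneseries_split 0 N) ?add0n => [|k _]; last by rewrite lee_fin.
rewrite sumEFin lte_add_pinfty ?ltry //; apply: le_lt_trans tail_lty.
rewrite -(nneseries_addn (f := fun k => (t k)%:E)) => [|k]; last by rewrite lee_fin.
rewrite -(nneseries_addn (f := fun k => (q ^+ k)%:E)) => [|k]; last by rewrite lee_fin exprn_ge0.
by apply: lee_nneseries => k *; rewrite lee_fin ?t0 // tq // leq_addl.
Qed.

Lemma nneseries_lty_partial_bounded (t : nat -> R) :
  (forall k, 0 <= t k) -> (\sum_(0 <= k <oo) (t k)%:E < +oo)%E ->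
  exists L, forall N, \sum_(0 <= k < N) t k <= L.
Proof.
move=> t0; have partial_le N : ((\sum_(0 <= k < N) t k)%:E <= \sum_(0 <= k <oo) (t k)%:E)%E.
  by rewrite -sumEFin; apply: nneseries_lim_ge => k _ _; rewrite lee_fin.
move: partial_le; case: (\sum_(0 <= k <oo) _)%E => [L| |] partial_le // _.
  by exists L => N; rewrite -lee_fin.
by have := partial_le 0%N; rewrite big_geq.
Qed.

Lemma weighted_series_lty (u : nat -> R) (beta c : R) N :
  c < beta -> (forall k, 0 <= u k) -> (forall k, (N <= k)%N -> ln (u k) / k%:R <= c) ->
  (\sum_(0 <= k <oo) ((expR (- (k%:R * beta)) * u k)%:E) < +oo)%E.
Proof.
move=> cb u0 uc; apply: (@nneseries_lty_eventually_geometric _ (expR (c - beta)) N.+1).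
- by rewrite expR_ge0 -expR0 ltr_expR subr_lt0.
- by move=> k; rewrite mulr_ge0 ?expR_ge0.
- move=> k Nk; have k0 : 0 < k%:R :> R by rewrite ltr0n (leq_trans _ Nk).
  have uk_le : u k <= expR (k%:R * c).
    have [uk0|uk0] := leP (u k) 0; first by rewrite (le_trans uk0) ?expR_ge0.
    by rewrite -[u k]lnK ?posrE // ler_expR mulrC -ler_pdivrMr // uc // ltnW.
  rewrite -expRM_natl; apply: le_trans (ler_wpM2l (expR_ge0 _) uk_le) _.
  by rewrite -expRD ler_expR; lra.
Qed.

End GrowthRates.

Section TupleSums.
Variables (V : nmodType) (E : finType).

Lemma sum_tuple_cons k (F : k.+1.-tuple E -> V) :
  \sum_(t : k.+1.-tuple E) F t = \sum_(e : E) \sum_(t : k.-tuple E) F [tuple of e :: t].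
Proof.
rewrite pair_big /= (reindex (fun p : E * k.-tuple E => [tuple of p.1 :: p.2])) //=.
exists (fun t : k.+1.-tuple E => (thead t, [tuple of behead t])).
  by move=> [e t] _ /=; congr pair; apply: val_inj.
by move=> t _; apply: val_inj => /=; rewrite [in RHS](tuple_eta t).
Qed.

Lemma sum_tuple_rev k (F : k.-tuple E -> V) :
  \sum_(t : k.-tuple E) F t = \sum_(t : k.-tuple E) F (rev_tuple t).
Proof.
rewrite (reindex_inj (h := @rev_tuple k E)) //.
by move=> t1 t2 /(congr1 val) /= /(congr1 rev); rewrite !revK => /val_inj.
Qed.

End TupleSums.

Lemma finite_uniform_bound (R : realDomainType) (T : finType) (f : nat -> T -> R)
    (P : T -> Prop) :
  (forall w, P w -> exists B, forall N, f N w <= B) ->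
  exists2 M, 1 <= M & forall N w, P w -> f N w <= M.
Proof.
move=> bounded.
have /choice[B HB] : forall w, exists B : R, P w -> forall N, f N w <= B.
  move=> w; have [/bounded[B fB]|nPw] := pselect (P w); first by exists B.
  by exists 0 => /nPw.
exists (\big[Num.max/1]_w B w); first exact: bigmax_ge_id.
by move=> N w Pw; apply: le_trans (HB w Pw N) (le_bigmax _ _ _).
Qed.

Section PathCounts.
Variables (R : realType) (n : nat) (E : finType) (s r : E -> 'I_n).

Definition npaths k (w : 'I_n) : R := \sum_(mu : k.-tuple E) word_norm R s r mu w.

Lemma word_ip_rcons mu e (a : 'I_n -> R) :
  word_ip s r (rcons mu e) a = ip_edge s r e (word_ip s r mu a).
Proof. by elim: mu a => [|f mu IH] a //=. Qed.

Lemma word_norm_rcons mu e w :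
  word_norm R s r (rcons mu e) w = (s e == w)%:R * word_norm R s r mu (r e).
Proof. by rewrite /word_norm word_ip_rcons /ip_edge /Defs.proj mulrC eq_sym. Qed.

Lemma npaths0 w : npaths 0 w = 1.
Proof.
rewrite /npaths (eq_bigr (fun _ => 1)) => [|t _]; last by rewrite tuple0.
by rewrite sumr_const card_tuple expn0.
Qed.

Lemma npathsS k w : npaths k.+1 w = \sum_(e | s e == w) npaths k (r e).
Proof.
rewrite /npaths sum_tuple_rev sum_tuple_cons [RHS]big_mkcond /=; apply: eq_bigr => e _.
under eq_bigr do rewrite /= rev_cons word_norm_rcons.
by rewrite -mulr_sumr [in RHS]sum_tuple_rev; case: eqP; rewrite ?mul1r ?mul0r.
Qed.

Lemma npaths_ge0 k w : 0 <= npaths k w.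
Proof.
by elim: k w => [|k IH] w; rewrite ?npaths0 // npathsS sumr_ge0.
Qed.

Lemma Sk_npaths tau k : Sk s r tau k = \sum_v tau v * npaths k v.
Proof.
rewrite /Sk /evs exchange_big /=; apply: eq_bigr => v _.
by rewrite /npaths mulr_sumr.
Qed.

Variable beta : R.

Definition pathsum N w := \sum_(k < N) expR (- (k%:R * beta)) * npaths k w.

Lemma pathsum_ge0 N w : 0 <= pathsum N w.
Proof. by apply: sumr_ge0 => k _; rewrite mulr_ge0 ?expR_ge0 ?npaths_ge0. Qed.

Lemma pathsum_ge1 N w : (0 < N)%N -> 1 <= pathsum N w.
Proof.
case: N => // N _; rewrite /pathsum big_ord_recl /= mul0r oppr0 expR0 npaths0 mul1r.
by rewrite lerDl sumr_ge0 // => k _; rewrite mulr_ge0 ?expR_ge0 ?npaths_ge0.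
Qed.

Lemma sum_pathsum_range N w :
  \sum_(e | s e == w) pathsum N (r e) = expR beta * (pathsum N.+1 w - 1).
Proof.
have -> : pathsum N.+1 w = 1 + expR (- beta) * \sum_(e | s e == w) pathsum N (r e).
  rewrite /pathsum big_ord_recl /= mul0r oppr0 expR0 npaths0 mul1r; congr (_ + _).
  rewrite exchange_big mulr_sumr; apply: eq_bigr => k _ /=.
  rewrite npathsS !mulr_sumr; apply: eq_bigr => e _.
  by rewrite mulrA -expRD /bump /= add1n -addn1 natrD; congr (expR _ * _); lra.
by rewrite addrAC subrr add0r mulrA -expRD subrr expR0 mul1r.
Qed.

Lemma sum_pathsum (tau : 'I_n -> R) N :
  \sum_v tau v * pathsum N v =
  \sum_(0 <= k < N) expR (- (k%:R * beta)) * Sk s r tau k.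
Proof.
rewrite big_mkord; under eq_bigr do rewrite /pathsum mulr_sumr.
rewrite exchange_big /=; apply: eq_bigr => k _.
by rewrite Sk_npaths mulr_sumr; apply: eq_bigr => v _; lra.
Qed.

Definition pathsum_bounded w := exists B, forall N, pathsum N w <= B.

Lemma pathsum_bounded_range e : pathsum_bounded (s e) -> pathsum_bounded (r e).
Proof.
move=> [B sumB]; exists (expR beta * B) => N.
apply: (@le_trans _ _ (\sum_(e' | s e' == s e) pathsum N (r e'))).
  by rewrite (bigD1 e) //= lerDl sumr_ge0 // => e' _; rewrite pathsum_ge0.
rewrite sum_pathsum_range ler_pM2l ?expR_gt0 //.
by apply: le_trans (sumB N.+1); rewrite gerBl.
Qed.

Lemma pathsum_bounded_support (tau : 'I_n -> R) L w :
  (forall v, 0 <= tau v) -> (forall N, \sum_v tau v * pathsum N v <= L) ->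
  0 < tau w -> pathsum_bounded w.
Proof.
move=> tau0 sumL tw; exists (L / tau w) => N; rewrite ler_pdivlMr // mulrC.
apply: le_trans (sumL N); rewrite (bigD1 w) //= lerDl.
by apply: sumr_ge0 => v _; rewrite mulr_ge0 ?pathsum_ge0.
Qed.

Section GeometricGrowth.
Variables (P : 'I_n -> Prop) (M : R).
Hypotheses (M1 : 1 <= M) (P_range : forall e, P (s e) -> P (r e))
  (pathsumM : forall N w, P w -> pathsum N w <= M).

Let l := expR beta * (1 - M^-1).

Let M0 : 0 < M. Proof. exact: lt_le_trans ltr01 M1. Qed.

Let l_ge0 : 0 <= l.
Proof. by rewrite mulr_ge0 ?expR_ge0 // subr_ge0 invf_le1. Qed.

Lemma npaths_le_pathsum k N w :
  (k < N)%N -> P w -> npaths k w <= l ^+ k * pathsum N w.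
Proof.
elim: k N w => [|k IH] [|N] w //= kN Pw.
  by rewrite npaths0 expr0 mul1r pathsum_ge1.
rewrite npathsS.
apply: (@le_trans _ _ (\sum_(e | s e == w) l ^+ k * pathsum N (r e))).
  by apply: ler_sum => e /eqP swe; apply: IH => //; apply: P_range; rewrite swe.
rewrite -mulr_sumr sum_pathsum_range exprSr -mulrA ler_wpM2l ?exprn_ge0 //.
have := pathsumM N.+1 Pw; set X := pathsum _ _ => XM.
have XMi : X / M <= 1 by rewrite ler_pdivrMr // mul1r.
by rewrite /l -mulrA ler_wpM2l ?expR_ge0 // mulrBl mul1r mulrC lerB.
Qed.

Lemma npaths_le_geometric k w : P w -> npaths k w <= M * l ^+ k.
Proof.
move=> Pw; rewrite mulrC; apply: le_trans (npaths_le_pathsum (ltnSn k) Pw) _.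
by rewrite ler_wpM2l ?exprn_ge0 ?pathsumM.
Qed.

End GeometricGrowth.

Lemma Sk_le_geometric (tau : 'I_n -> R) L :
  is_state tau ->
  (forall N, \sum_(0 <= k < N) expR (- (k%:R * beta)) * Sk s r tau k <= L) ->
  exists M l, [/\ 0 < M, 0 <= l, l < expR beta & forall k, Sk s r tau k <= M * l ^+ k].
Proof.
move=> [tau0 tau1] partialL.
have support_bounded w : 0 < tau w -> pathsum_bounded w.
  by apply: (pathsum_bounded_support tau0) => N; rewrite sum_pathsum.
have [M M1 pathsumM] := finite_uniform_bound (fun w (bw : pathsum_bounded w) => bw).
have M0 : 0 < M by exact: lt_le_trans ltr01 M1.
exists M, (expR beta * (1 - M^-1)); split=> //.
- by rewrite mulr_ge0 ?expR_ge0 // subr_ge0 invf_le1.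
- by rewrite gtr_pMr ?expR_gt0 // ltrBlDr ltrDl invr_gt0.
- move=> k; rewrite Sk_npaths -[leRHS]mul1r -[X in X * _]tau1 mulr_suml.
  apply: ler_sum => v _; have := tau0 v; rewrite le0r => /orP[/eqP->|tv].
    by rewrite !mul0r.
  rewrite ler_wpM2l ?tau0 //.
  exact: (npaths_le_geometric M1 (@pathsum_bounded_range) pathsumM _ (support_bounded v tv)).
Qed.

End PathCounts.

Section Avt.
Variables (R : realType) (n : nat) (E : finType) (s r : E -> 'I_n).

Lemma evs_ip_edge (tau a : 'I_n -> R) e : evs tau (ip_edge s r e a) = tau (s e) * a (r e).
Proof.
rewrite /evs /ip_edge /Defs.proj (bigD1 (s e)) //= eqxx mulr1 big1 ?addr0 //.
by move=> v /negbTE ->; rewrite !mulr0.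
Qed.

Lemma evs_proj (tau : 'I_n -> R) u : evs tau (Defs.proj R u) = tau u.
Proof.
rewrite /evs /Defs.proj (bigD1 u) //= eqxx mulr1 big1 ?addr0 //.
by move=> v /negbTE ->; rewrite mulr0.
Qed.

Lemma adjmxT_colvec (tau : 'I_n -> R) u j :
  ((adjmx R s r)^T *m colvec tau) u j = \sum_(e | r e == u) tau (s e).
Proof.
rewrite !mxE (eq_bigr (fun k => \sum_e ((s e == k) && (r e == u))%:R * tau k)).
  rewrite exchange_big [RHS]big_mkcond /=; apply: eq_bigr => e _.
  rewrite (bigD1 (s e)) //= eqxx big1 ?addr0 => [|k /negbTE]; first by case: ifP; rewrite ?mul1r ?mul0r.
  by rewrite eq_sym => ->; rewrite mul0r.
move=> k _; rewrite !mxE -sum1_card natr_sum big_mkcond mulr_suml /=.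
by apply: eq_bigr => e _; rewrite inE; case: (_ && _); rewrite ?mul1r ?mul0r.
Qed.

Lemma Avt_betaP (beta : R) tau :
  Avt_beta s r beta tau <->
  is_state tau /\ (adjmx R s r)^T *m colvec tau = expR beta *: colvec tau.
Proof.
have eigenE u : expR (- beta) * \sum_e evs tau (ip_edge s r e (Defs.proj R u)) =
                expR (- beta) * \sum_(e | r e == u) tau (s e).
  congr (_ * _); rewrite [RHS]big_mkcond /=; apply: eq_bigr => e _.
  by rewrite evs_ip_edge /Defs.proj; case: eqP; rewrite ?mulr1 ?mulr0.
split=> -[st eig]; split=> //.
- apply/matrixP => u j; rewrite adjmxT_colvec !mxE -(evs_proj tau u) eig eigenE.
  by rewrite mulrA -expRD subrr expR0 mul1r.
- move=> a.
  have eigu u : \sum_(e | r e == u) tau (s e) = expR beta * tau u.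
    by move/matrixP: eig => /(_ u ord0); rewrite adjmxT_colvec !mxE.
  under eq_bigr do rewrite evs_ip_edge.
  rewrite (partition_big r xpredT) //= mulr_sumr; apply: eq_bigr => u _.
  rewrite (eq_bigr (fun e => a u * tau (s e))) => [|e /eqP <-]; last by rewrite mulrC.
  by rewrite -mulr_sumr eigu (mulrCA (a u)) expRN mulKf ?gt_eqF ?expR_gt0 // mulrC.
Qed.

End Avt.

Theorem corollary8p7 (R : realType) (n : nat) (E : finType) (s r : E -> 'I_n)
  (beta : R) (hbeta : 0 < beta) :
  (forall tau : 'I_n -> R,
     Tr_beta (R:=R) s r beta tau <->
     (is_state tau /\ (entropy (R:=R) s r tau < beta%:E)%E)) /\
  (forall tau : 'I_n -> R,
     Avt_beta (R:=R) s r beta tau <->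
     (is_state tau /\
      (adjmx R s r)^T *m colvec tau = expR beta *: colvec tau)).
Proof.
split=> tau; last exact: Avt_betaP.
have Sk_ge0 : is_state tau -> forall k, 0 <= Sk s r tau k.
  by move=> [tau0 _] k; rewrite Sk_npaths sumr_ge0 // => v _; rewrite mulr_ge0 ?npaths_ge0.
pose rate k := ln (Sk s r tau k) / k%:R.
split=> -[st tau_beta]; split=> //; move: tau_beta; rewrite /entropy.
- case: asboolP => _ series_lty; first by rewrite lte_fin.
  have weights_ge0 k : 0 <= expR (- (k%:R * beta)) * Sk s r tau k.
    by rewrite mulr_ge0 ?expR_ge0 ?Sk_ge0.
  have [L partialL] := nneseries_lty_partial_bounded weights_ge0 series_lty.
  have [M [l [M0 l0 lb SkM]]] := Sk_le_geometric st partialL.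
  by apply/(limn_esup_ltP rate); exact: geometric_bound_ln_rate hbeta M0 l0 lb SkM.
- case: asboolP => [[N Sk0] _ | _ /(limn_esup_ltP rate)[c [N [cb rate_le]]]].
    apply: (@weighted_series_lty _ _ _ 0 N) hbeta (Sk_ge0 st) _ => k Nk.
    by rewrite Sk0 // ln0 // mul0r.
  exact: weighted_series_lty cb (Sk_ge0 st) rate_le.
Qed.
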